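(* Let $G$ be a discrete abelian group (written additively), $\alpha\in\mathcal C_c(G,\mathbf k)$, and consider the convolution equation $\sigma(s)=\alpha\star s$, i.e. $s_g^{(t+1)}=\sum_{h\in G}\alpha_h^{(t)}s_{g-h}^{(t)}$. Let ${\rm Sol}_c(\alpha,L^c)$ be the complex vector space of its solutions $s\in\mathcal C(G,{\rm Seq}(\mathbf C))$ such that each $s^{(t)}$ has finite support. Then the Fourier transform $\mathcal F(s)=\sum_{g\in G}s_g\,e^{ig\theta}$ is an isomorphism of $G$-modules from ${\rm Sol}_c(\alpha,L^c)$ onto $$\Big(\prod_{\tau=0}^{t-1}\hat\alpha_\theta^{(\tau)}\Big)\cdot\mathbf C[e^{ig\theta}: g\in G]\subset{\rm Seq}(\mathbf C)[e^{ig\theta}:g\in G],$$ i.e. onto the set of products of the fixed sequence-valued Fourier polynomial $t\mapsto\prod_{\tau=0}^{t-1}\hat\alpha^{(\tau)}_\theta$ with complex Fourier polynomials.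
   Context: ${\rm Seq}(\mathbf C)$ is the ring of complex sequences indexed by $t\in\mathbf Z_{\ge0}$ with shift $\sigma(x)^{(t)}=x^{(t+1)}$; $\mathbf k\subseteq{\rm Seq}(\mathbf C)$ is a $\sigma$-stable subring with constants $\mathbf C$. $\mathcal C_c(G,\mathbf k)$ denotes finitely supported functions $G\to\mathbf k$. For $g\in G$, $e^{ig\theta}$ denotes the function on the dual group $\widehat G={\rm Hom}(G,\mathbf S^1)$ given by $\rho\mapsto\rho(g)$; for a ring $R$, $R[e^{ig\theta}:g\in G]$ is the ring of finite sums $\sum c_g e^{ig\theta}$, $c_g\in R$, with $e^{ig\theta}e^{ih\theta}=e^{i(g+h)\theta}$ (Fourier polynomials). $\hat\alpha^{(\tau)}_\theta=\sum_g\alpha^{(\tau)}_g e^{ig\theta}$. $G$ acts on functions by $(s\star h)_g=s_{g-h}$ and on Fourier polynomials by $e^{ig\theta}\star h=e^{i(g+h)\theta}$. $L^c$ is the smallest $\sigma$-subring of ${\rm Seq}(\mathbf C)$ containing $\mathbf k$ and all values of finite-support solutions. *)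

From HB Require Import structures.
From mathcomp Require Import all_boot all_order all_algebra.
From mathcomp Require Import classical_sets fsbigop reals.
From mathcomp Require Import complex.
Set Implicit Arguments. Unset Strict Implicit. Unset Printing Implicit Defensive.
Import Order.TTheory GRing.Theory Num.Theory.
Local Open Scope ring_scope.

Definition CC (R : realType) := complex R.

Definition Seq (R : realType) := nat -> CC R.
Definition sshift (R : realType) (x : Seq R) : Seq R := fun t => x t.+1.

Definition sigma_subring (R : realType) (S : Seq R -> Prop) : Prop :=
  [/\ S (fun _ => 1),
      (forall x y, S x -> S y -> S (fun t => x t - y t)),
      (forall x y, S x -> S y -> S (fun t => x t * y t)) &
      (forall x, S x -> S (sshift x))].

Definition sigma_ring_with_constants_C (R : realType) (k : Seq R -> Prop) :=
  sigma_subring k /\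
  (forall x : Seq R, (k x /\ sshift x = x) <-> exists c : CC R, x = fun _ => c).

Definition fin_supp (G : zmodType) (V : zmodType) (f : G -> V) : Prop :=
  exists S : seq G, forall g, f g != 0 -> g \in S.

Definition fin_supp_seq (R : realType) (G : zmodType) (f : G -> Seq R) : Prop :=
  exists S : seq G, forall g, ~ (f g = fun _ => 0) -> g \in S.

(* Fourier polynomials C[e^{ig theta} : g in G] are represented by their
   coefficient functions G -> C with finite support (group algebra);
   product = convolution (e^{ig}e^{ih} = e^{i(g+h)}). *)
Definition fconv (R : realType) (G : zmodType) (p q : G -> CC R) : G -> CC R :=
  fun g => (\sum_(h \in [set: G]) p h * q (g - h))%R.

Definition fdelta0 (R : realType) (G : zmodType) : G -> CC R :=
  fun g => if g == 0 then 1 else 0.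

(* hat alpha^{(tau)}_theta = sum_g alpha^{(tau)}_g e^{ig theta} *)
Definition alpha_hat (R : realType) (G : zmodType) (alpha : G -> Seq R)
  (tau : nat) : G -> CC R := fun g => alpha g tau.

Fixpoint alpha_prod (R : realType) (G : zmodType) (alpha : G -> Seq R)
  (t : nat) : G -> CC R :=
  match t with
  | 0 => @fdelta0 R G
  | t'.+1 => fconv (alpha_prod alpha t') (alpha_hat alpha t')
  end.

Definition is_solution (R : realType) (G : zmodType) (alpha s : G -> Seq R) :=
  forall g t, s g t.+1 = (\sum_(h \in [set: G]) alpha h t * s (g - h) t)%R.

Definition fin_supp_each (R : realType) (G : zmodType) (s : G -> Seq R) :=
  forall t, fin_supp (fun g => s g t).

Definition fin_solution (R : realType) (G : zmodType) (alpha s : G -> Seq R) :=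
  is_solution alpha s /\ fin_supp_each s.

Definition Lc (R : realType) (G : zmodType) (k : Seq R -> Prop)
  (alpha : G -> Seq R) (x : Seq R) : Prop :=
  forall S : Seq R -> Prop, sigma_subring S ->
    (forall y, k y -> S y) ->
    (forall s g, fin_solution alpha s -> S (s g)) -> S x.

Definition Sol_c (R : realType) (G : zmodType) (k : Seq R -> Prop)
  (alpha : G -> Seq R) (s : G -> Seq R) : Prop :=
  fin_solution alpha s /\ forall g, Lc k alpha (s g).

(* Fourier transform: F(s) = sum_g s_g e^{ig theta}, a sequence (indexed by t)
   of Fourier polynomials, coefficient of e^{ig theta} at time t is s_g^{(t)}. *)
Definition fourier (R : realType) (G : zmodType) (s : G -> Seq R) :
  nat -> G -> CC R := fun t g => s g t.

(* G-actions: (s * h)_g = s_{g-h};  e^{ig theta} * h = e^{i(g+h) theta}. *)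
Definition gact_sol (R : realType) (G : zmodType) (s : G -> Seq R) (h : G) :
  G -> Seq R := fun g => s (g - h).
Definition gact_four (R : realType) (G : zmodType) (P : nat -> G -> CC R) (h : G) :
  nat -> G -> CC R := fun t g => P t (g - h).

From HB Require Import structures.
From mathcomp Require Import all_boot all_order all_algebra.
From mathcomp Require Import classical_sets fsbigop reals.
From mathcomp Require Import complex.
From mathcomp Require Import boolp.
Import GRing.Theory.
Local Open Scope ring_scope.

(* Reading the equation coefficientwise, [s] solves [sigma(s) = alpha * s]
   exactly when its Fourier transform satisfies [F(s)^(t+1) = hat alpha^(t) F(s)^(t)]
   in the group algebra.  Since convolution of finitely supported functions is
   associative and commutative, induction on [t] gives
   [F(s)^(t) = (prod_(tau < t) hat alpha^(tau)) F(s)^(0)], and conversely every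
   [q] in the group algebra generates the solution [t |-> (prod_(tau < t)
   hat alpha^(tau)) q].  Such solutions have finite support at each time, hence
   their values lie in [L^c] by definition of [L^c]. *)

Section Convolution.
Variables (R : realType) (G : zmodType).
Local Notation C := (CC R).
Implicit Types (p q a u v : G -> C).

Lemma fsumT_supp (F : G -> C) (r : seq G) :
  (forall g, F g != 0 -> g \in r) ->
  \sum_(h \in [set: G]) F h = \sum_(h <- undup r) F h.
Proof.
move=> suppF; rewrite (fsbigE (undup r)) ?undup_uniq //.
  by apply: eq_bigl => h; rewrite in_setT.
move=> h _; rewrite mem_undup => hNr; apply/eqP.
by apply: contraNT hNr; apply: suppF.
Qed.

Lemma exchange_fsumT (F : G -> G -> C) (r1 r2 : seq G) :
  (forall x y, F x y != 0 -> x \in r1) -> (forall x y, F x y != 0 -> y \in r2) ->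
  \sum_(x \in [set: G]) \sum_(y \in [set: G]) F x y =
  \sum_(y \in [set: G]) \sum_(x \in [set: G]) F x y.
Proof.
move=> supp1 supp2.
have sum_supp (H : G -> G -> C) (r r' : seq G) :
    (forall x y, H x y != 0 -> x \in r) ->
    forall x, \sum_(y <- r') H x y != 0 -> x \in r.
  move=> suppH x; apply: contraR => xNr; apply/eqP/big1 => y _.
  by apply/eqP; apply: contraNT xNr; apply: suppH.
under eq_fsbigr do rewrite (fsumT_supp _ _ (supp2 _)).
under [RHS]eq_fsbigr do rewrite (fsumT_supp (F^~ _) _ (supp1^~ _)).
rewrite (fsumT_supp _ _ (sum_supp _ _ _ supp1)).
rewrite [RHS](fsumT_supp _ _ (sum_supp (fun y x => F x y) _ _ (fun y x => supp2 x y))).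
exact: exchange_big.
Qed.

Lemma fconvC p q : fconv p q = fconv q p.
Proof.
apply/funext => g; rewrite /fconv (reindex_fsbigT (fun h => g - h)).
  by apply: eq_fsbigr => h _; rewrite subKr mulrC.
by exists (fun h => g - h) => h; rewrite subKr.
Qed.

Lemma fconvA p a q : fin_supp p -> fin_supp a ->
  fconv (fconv p a) q = fconv p (fconv a q).
Proof.
move=> [Sp suppp] [Sa suppa]; apply/funext => g; rewrite /fconv.
under eq_fsbigr do rewrite mulr_fsuml.
under [RHS]eq_fsbigr => x _.
  rewrite mulr_fsumr (reindex_fsbigT (fun h => h - x)); last first.
    by exists (fun y => y + x) => y; rewrite ?addrK ?subrK.
  over.
rewrite [RHS](exchange_fsumT _ Sp [seq x + y | x <- Sp, y <- Sa]).
- apply: eq_fsbigr => h _; apply: eq_fsbigr => x _.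
  by rewrite opprB addrA subrK mulrA.
- move=> x h; have [->|/suppp //] := eqVneq (p x) 0.
  by rewrite !mul0r eqxx.
- move=> x h; have [->|/suppa ha] := eqVneq (a (h - x)) 0.
    by rewrite mul0r mulr0 eqxx.
  have [->|/suppp px] := eqVneq (p x) 0; first by rewrite !mul0r eqxx.
  by move=> _; have := allpairs_f +%R px ha; rewrite addrC subrK.
Qed.

Lemma fconv1 q : fconv (@fdelta0 R G) q = q.
Proof.
apply/funext => g; rewrite /fconv (fsumT_supp _ [:: 0]).
  by rewrite /= big_seq1 /fdelta0 eqxx mul1r subr0.
by move=> h; rewrite /fdelta0 inE; case: (h =P 0); rewrite ?mul0r ?eqxx.
Qed.

Lemma fconv_comb a (c : C) u v : fin_supp a ->
  fconv a (fun g => c * u g + v g) = (fun g => c * fconv a u g + fconv a v g).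
Proof.
move=> [Sa suppa]; apply/funext => g.
have supp_mul (z : G -> C) h : a h * z (g - h) != 0 -> h \in Sa.
  by have [->|/suppa //] := eqVneq (a h) 0; rewrite mul0r eqxx.
rewrite /fconv (fsumT_supp _ _ (supp_mul (fun g => c * u g + v g))).
rewrite !(fsumT_supp _ _ (supp_mul _)) big_distrr -big_split /=.
by apply: eq_bigr => h _; rewrite mulrDr mulrCA.
Qed.

Lemma fconv_shiftr a u (h : G) :
  fconv a (fun g => u (g - h)) = (fun g => fconv a u (g - h)).
Proof.
by apply/funext => g; apply: eq_fsbigr => h' _; rewrite addrAC.
Qed.

Lemma fin_supp_fdelta0 : fin_supp (@fdelta0 R G).
Proof. by exists [:: 0] => g; rewrite /fdelta0 inE; case: (g =P 0); rewrite ?eqxx. Qed.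

Lemma fin_supp_fconv p q : fin_supp p -> fin_supp q -> fin_supp (fconv p q).
Proof.
move=> [Sp suppp] [Sq suppq]; exists [seq x + y | x <- Sp, y <- Sq] => g.
apply: contraR => gNS; apply/eqP/fsbig1 => h _.
have [->|/suppp hp] := eqVneq (p h) 0; first by rewrite mul0r.
have [->|/suppq hq] := eqVneq (q (g - h)) 0; first by rewrite mulr0.
by case/negP: gNS; have := allpairs_f +%R hp hq; rewrite addrC subrK.
Qed.

Lemma fin_supp_comb (c : C) u v : fin_supp u -> fin_supp v ->
  fin_supp (fun g => c * u g + v g).
Proof.
move=> [Su suppu] [Sv suppv]; exists (Su ++ Sv) => g.
rewrite mem_cat; apply: contraR; rewrite negb_or => /andP[gNu gNv].
have /eqP -> : u g == 0 by apply: contraR gNu; apply: suppu.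
have /eqP -> : v g == 0 by apply: contraR gNv; apply: suppv.
by rewrite mulr0 addr0.
Qed.

Lemma fin_supp_shift u (h : G) : fin_supp u -> fin_supp (fun g => u (g - h)).
Proof.
move=> [Su suppu]; exists [seq y + h | y <- Su] => g /suppu gh.
by apply/mapP; exists (g - h); rewrite ?subrK.
Qed.

End Convolution.

Section Solutions.
Variables (R : realType) (G : zmodType) (alpha : G -> Seq R).
Hypothesis alpha_fin : fin_supp_seq alpha.

Lemma fin_supp_alpha_hat t : fin_supp (alpha_hat alpha t).
Proof.
have [S suppS] := alpha_fin; exists S => g nz; apply: suppS => alpha_g0.
by move: nz; rewrite /alpha_hat alpha_g0 eqxx.
Qed.

Lemma fin_supp_alpha_prod t : fin_supp (alpha_prod alpha t).
Proof.
elim: t => [|t IHt]; first exact: fin_supp_fdelta0.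
exact: fin_supp_fconv IHt (fin_supp_alpha_hat t).
Qed.

Lemma fconv_alpha_prodS t q :
  fconv (alpha_prod alpha t.+1) q =
  fconv (alpha_hat alpha t) (fconv (alpha_prod alpha t) q).
Proof.
rewrite [alpha_prod _ _.+1]/= [fconv (alpha_prod _ _) _]fconvC fconvA //.
  exact: fin_supp_alpha_hat.
exact: fin_supp_alpha_prod.
Qed.

Lemma is_solutionE s :
  is_solution alpha s <->
  forall t, fourier s t.+1 = fconv (alpha_hat alpha t) (fourier s t).
Proof.
split=> [sol t | sol g t]; first by apply/funext => g; apply: sol.
exact: (congr1 (fun P => P g) (sol t)).
Qed.

Lemma fourier_solution s : is_solution alpha s ->
  forall t, fourier s t = fconv (alpha_prod alpha t) (fourier s 0).
Proof.
move/is_solutionE => sol; elim=> [|t IHt]; first by rewrite fconv1.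
by rewrite sol IHt fconv_alpha_prodS.
Qed.

Lemma fin_solution_alpha_prod q : fin_supp q ->
  fin_solution alpha (fun g t => fconv (alpha_prod alpha t) q g).
Proof.
move=> q_fin; split; first by apply/is_solutionE => t; apply: fconv_alpha_prodS.
by move=> t; apply: fin_supp_fconv q_fin; apply: fin_supp_alpha_prod.
Qed.

Lemma fin_solution_comb (c : CC R) s1 s2 :
  fin_solution alpha s1 -> fin_solution alpha s2 ->
  fin_solution alpha (fun g t => c * s1 g t + s2 g t).
Proof.
move=> [/is_solutionE sol1 fin1] [/is_solutionE sol2 fin2]; split.
  apply/is_solutionE => t; rewrite fconv_comb; last exact: fin_supp_alpha_hat.
  by rewrite -sol1 -sol2.
by move=> t; apply: fin_supp_comb.
Qed.

Lemma fin_solution_gact s h :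
  fin_solution alpha s -> fin_solution alpha (gact_sol s h).
Proof.
move=> [/is_solutionE sol fin]; split; last by move=> t; exact: fin_supp_shift h (fin t).
apply/is_solutionE => t.
by rewrite -[fourier _ t]/(fun g => fourier s t (g - h)) fconv_shiftr -sol.
Qed.

Lemma fin_solution_Sol_c (k : Seq R -> Prop) s :
  fin_solution alpha s -> Sol_c k alpha s.
Proof. by move=> fin_s; split=> // g S _ _; apply. Qed.

End Solutions.

Theorem theorem2p6 (R : realType) (G : zmodType) (k : Seq R -> Prop)
  (hk : sigma_ring_with_constants_C k)
  (alpha : G -> Seq R) (halpha_k : forall g, k (alpha g))
  (halpha_fin : fin_supp_seq alpha) :
  ([/\ (* Sol_c(alpha, L^c) is a complex vector space, stable under G *)
      (forall (a : CC R) s1 s2, Sol_c k alpha s1 -> Sol_c k alpha s2 ->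
         Sol_c k alpha (fun g t => a * s1 g t + s2 g t)),
      (forall h s, Sol_c k alpha s -> Sol_c k alpha (gact_sol s h)),
      (* F is C-linear *)
      (forall (a : CC R) (s1 s2 : G -> Seq R),
         fourier (fun g t => a * s1 g t + s2 g t)
         = (fun t g => a * fourier s1 t g + fourier s2 t g)),
      (* F is G-equivariant *)
      (forall (h : G) (s : G -> Seq R), fourier (gact_sol s h) = gact_four (fourier s) h) &
      (* F is injective on Sol_c *)
      (forall s1 s2, Sol_c k alpha s1 -> Sol_c k alpha s2 ->
         fourier s1 = fourier s2 -> s1 = s2)] /\
      (* the image of Sol_c under F is (prod_{tau<t} hat alpha^{(tau)}) . C[e^{ig theta}] *)
      (forall P : nat -> G -> CC R,
         (exists s, Sol_c k alpha s /\ fourier s = P) <->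
         (exists q : G -> CC R, fin_supp q /\
            P = (fun t => fconv (alpha_prod alpha t) q)))).
Proof.
split; first split.
- move=> c s1 s2 [fin1 _] [fin2 _]; apply: fin_solution_Sol_c.
  exact: fin_solution_comb.
- move=> h s [fin_s _]; apply: fin_solution_Sol_c; exact: fin_solution_gact.
- by [].
- by [].
- move=> s1 s2 _ _ E; apply/funext => g; apply/funext => t.
  exact: (congr1 (fun P => P t g) E).
move=> P; split.
  move=> [s [[[sol fin_s] _] <-]]; exists (fourier s 0); split; first exact: fin_s.
  by apply/funext; apply: fourier_solution.
move=> [q [q_fin ->]]; exists (fun g t => fconv (alpha_prod alpha t) q g).
split=> //; apply: fin_solution_Sol_c; exact: fin_solution_alpha_prod.
Qed.
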